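(* Let $L$ be an $\omega$-regular language over $\Sigma$, let $\mathcal{F}=(M,\{A^u\})$ be the periodic (respectively syntactic, recurrent) FDFA of $L$, and let $u,v\in\Sigma^*$. If $(u,v)$ is accepted by $\mathcal{F}$, then $(u,v^k)$ is accepted by $\mathcal{F}$ for every $k\geq1$.
   Context: For a complete DFA $A$ and finite word $w$, $A(w)$ is the state reached from the initial state on $w$. An FDFA is $\mathcal{F}=(M,\{A^q\}_{q\in Q})$ with $M$ a complete DFA without accepting states and each $A^q$ a complete DFA; $(u,v)$ is accepted by $\mathcal{F}$ iff $M(uv)=M(u)$ and $v\in L(A^{M(u)})$. Canonical FDFAs of an $\omega$-regular $L$: $x\sim_L y$ iff $\forall w\in\Sigma^\omega$, $xw\in L\Leftrightarrow yw\in L$. The leading automaton has states the classes of $\sim_L$, initial state $[\epsilon]$, transitions $[x]\xrightarrow{a}[xa]$. For each state with representative $u$: $x\approx^u_P y$ iff $\forall v\in\Sigma^*$: $u(xv)^\omega\in L\Leftrightarrow u(yv)^\omega\in L$; $x\approx^u_S y$ iff $ux\sim_L uy$ and $\forall v$: $uxv\sim_L u\Rightarrow(u(xv)^\omega\in L\Leftrightarrow u(yv)^\omega\in L)$; $x\approx^u_R y$ iff $\forall v$: $(uxv\sim_L u\wedge u(xv)^\omega\in L)\Leftrightarrow(uyv\sim_L u\wedge u(yv)^\omega\in L)$. For $K\in\{P,S,R\}$ the progress automaton $A^u$ has states the classes of $\approx^u_K$, initial state $[\epsilon]$, transitions $[x]\xrightarrow{a}[xa]$, and accepting states the classes $[v]$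 with $uv^\omega\in L$ ($K=P$), resp. with $uv\sim_L u$ and $uv^\omega\in L$ ($K\in\{S,R\}$). These are the periodic ($P$), syntactic ($S$) and recurrent ($R$) FDFAs of $L$. *)

From mathcomp Require Import all_boot boolp.
Set Implicit Arguments. Unset Strict Implicit. Unset Printing Implicit Defensive.

Section Defs.
Variable S : finType.

Definition oword := nat -> S.

Definition prepend (x : seq S) (w : oword) : oword :=
  fun n => if n < size x then nth (w 0) x n else w (n - size x).

(* u x^omega is in L ; x^omega is only an omega-word for nonempty x,
   so the predicate is false when x is empty *)
Definition inL (L : oword -> Prop) (u x : seq S) : Prop :=
  match x with
  | [::] => False
  | a :: _ => L (prepend u (fun n => nth a x (n %% size x)))
  end.

Definition omega_regular (L : oword -> Prop) : Prop :=
  exists (Q : finType) (I : pred Q) (T : Q -> S -> Q -> bool) (F : pred Q),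
    forall w, L w <->
      exists r : nat -> Q, I (r 0) /\ (forall n, T (r n) (w n) (r n.+1))
                           /\ (forall m, exists n, m <= n /\ F (r n)).

Record dfa := Dfa {
  dfa_st : Type;
  dfa_init : dfa_st;
  dfa_step : dfa_st -> S -> dfa_st;
  dfa_acc : dfa_st -> Prop }.

Definition dfa_run (A : dfa) (w : seq S) : dfa_st A :=
  foldl (@dfa_step A) (@dfa_init A) w.

Record fdfa := Fdfa {
  lead : dfa;                     (* leading automaton M (acceptance unused) *)
  prog : dfa_st lead -> dfa }.

Definition fdfa_accepts (F : fdfa) (u v : seq S) : Prop :=
  dfa_run (lead F) (u ++ v) = dfa_run (lead F) u /\
  dfa_acc (dfa_run (prog (dfa_run (lead F) u)) v).

Definition simL (L : oword -> Prop) (x y : seq S) : Prop :=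
  forall w, L (prepend x w) <-> L (prepend y w).

Inductive fdfa_kind := Periodic | Syntactic | Recurrent.

Definition progeq (K : fdfa_kind) (L : oword -> Prop) (u x y : seq S) : Prop :=
  match K with
  | Periodic => forall v, inL L u (x ++ v) <-> inL L u (y ++ v)
  | Syntactic => simL L (u ++ x) (u ++ y) /\
      forall v, simL L (u ++ x ++ v) u -> (inL L u (x ++ v) <-> inL L u (y ++ v))
  | Recurrent => forall v,
      (simL L (u ++ x ++ v) u /\ inL L u (x ++ v)) <->
      (simL L (u ++ y ++ v) u /\ inL L u (y ++ v))
  end.

Definition progacc (K : fdfa_kind) (L : oword -> Prop) (u v : seq S) : Prop :=
  match K with
  | Periodic => inL L u v
  | _ => simL L (u ++ v) u /\ inL L u v
  end.

Definition cls (E : seq S -> seq S -> Prop) (x : seq S) : seq S -> Prop :=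
  fun y => E x y.

Definition class_of (E : seq S -> seq S -> Prop) :=
  {C : seq S -> Prop | exists x, C = cls E x}.

Definition repr (E : seq S -> seq S -> Prop) (C : class_of E) : seq S :=
  proj1_sig (cid (proj2_sig C)).

Definition class_dfa (E : seq S -> seq S -> Prop) (acc : seq S -> Prop) : dfa :=
  {| dfa_st := class_of E;
     dfa_init := exist _ (cls E [::]) (ex_intro _ [::] erefl);
     dfa_step := fun C a =>
       exist _ (cls E (repr C ++ [:: a])) (ex_intro _ (repr C ++ [:: a]) erefl);
     dfa_acc := fun C => exists v, proj1_sig C = cls E v /\ acc v |}.

Definition leading_dfa (L : oword -> Prop) : dfa :=
  class_dfa (simL L) (fun _ => False).

Definition progress_dfa (K : fdfa_kind) (L : oword -> Prop) (u : seq S) : dfa :=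
  class_dfa (progeq K L u) (progacc K L u).

Definition canonical_fdfa (K : fdfa_kind) (L : oword -> Prop) : fdfa :=
  {| lead := leading_dfa L;
     prog := fun C : class_of (simL L) => progress_dfa K L (repr C) |}.

End Defs.

From Stdlib Require Import RelationClasses.
From Pilot Require Import Defs.
From mathcomp Require Import all_boot boolp.

(* In each canonical automaton the state reached on a word is the class of
   that word, and acceptance of the reached state is the acceptance condition
   evaluated on the word itself.  Hence (u, v) is accepted iff u v ~_L u and
   the progress condition holds for v and the representative r of [u].  Both
   survive replacing v by v^k: u v ~_L u iterates by right congruence, and
   v^k induces the same periodic word (v^k)^omega = v^omega as v. *)

Section ClassDfa.
Variables (S : finType) (E : seq S -> seq S -> Prop) (acc : seq S -> Prop).
Context `{Equivalence _ E}.
Hypothesis E_rcong : forall x y z, E x y -> E (x ++ z) (y ++ z).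
Hypothesis acc_compat : forall x y, E x y -> acc x -> acc y.

Lemma cls_eqP x y : cls E x = cls E y <-> E x y.
Proof.
split=> [eq_xy | Exy].
  have : cls E y y by rewrite /cls; reflexivity.
  by rewrite -eq_xy.
apply: funext => z; apply: propext; rewrite /cls.
by split=> ?; [transitivity x; first symmetry | transitivity y].
Qed.

Lemma repr_cls (C : class_of E) : proj1_sig C = cls E (Defs.repr C).
Proof. exact: proj2_sig (cid (proj2_sig C)). Qed.

Lemma class_dfa_state_eq (C D : dfa_st (class_dfa E acc)) :
  proj1_sig C = proj1_sig D -> C = D.
Proof. by case: C D => [c pc] [d pd] /= c_d; subst; congr exist; exact: Prop_irrelevance. Qed.

Lemma class_dfa_run w : proj1_sig (dfa_run (class_dfa E acc) w) = cls E w.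
Proof.
suff run_from (C : class_of E) x : proj1_sig C = cls E x ->
    proj1_sig (foldl (@dfa_step _ (class_dfa E acc)) C w) = cls E (x ++ w).
  exact: (run_from (dfa_init (class_dfa E acc)) [::] erefl).
elim: w C x => [|a w IHw] C x C_x; first by rewrite cats0.
rewrite -cat_rcons -cats1; apply: (IHw (@dfa_step _ (class_dfa E acc) C a)) => /=.
by rewrite cls_eqP; apply: E_rcong; rewrite -cls_eqP -repr_cls.
Qed.

Lemma class_dfa_run_eqP x y :
  dfa_run (class_dfa E acc) x = dfa_run (class_dfa E acc) y <-> E x y.
Proof.
split=> [eq_xy | Exy].
  by rewrite -cls_eqP -!class_dfa_run eq_xy.
by apply: class_dfa_state_eq; rewrite !class_dfa_run cls_eqP.
Qed.

Lemma class_dfa_accP w : dfa_acc (dfa_run (class_dfa E acc) w) <-> acc w.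
Proof.
rewrite /= class_dfa_run; split=> [[v [w_v acc_v]] | acc_w]; last by exists w.
by apply: acc_compat acc_v; rewrite -cls_eqP.
Qed.

End ClassDfa.

Section CanonicalFdfa.
Variables (S : finType) (L : oword S -> Prop).
Implicit Types (r u x y z v : seq S) (k : nat).

Lemma prepend_cat x y (w : oword S) : prepend (x ++ y) w = prepend x (prepend y w).
Proof.
apply: funext => n; rewrite /prepend size_cat nth_cat.
case: (ltnP n (size x)) => n_x.
  by rewrite ltn_addr //; apply: set_nth_default.
by rewrite ltn_subLR // subnDA.
Qed.

#[global] Instance simL_equiv : Equivalence (simL L).
Proof.
split=> [x w | x y xy w | x y z xy yz w] //; first by rewrite xy.
by rewrite xy yz.
Qed.

Lemma simL_rcong x y z : simL L x y -> simL L (x ++ z) (y ++ z).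
Proof. by move=> xy w; rewrite !prepend_cat; apply: xy. Qed.

Lemma simL_cat_flatten_nseq r v k :
  simL L (r ++ v) r -> simL L (r ++ flatten (nseq k v)) r.
Proof.
move=> rv_r; elim: k => [|k IHk] /=; first by rewrite cats0.
by rewrite catA; transitivity (r ++ flatten (nseq k v)); first exact: simL_rcong.
Qed.

Lemma size_flatten_nseq k x : size (flatten (nseq k x)) = k * size x.
Proof. by elim: k => //= k IHk; rewrite size_cat IHk mulSn. Qed.

Lemma nth_flatten_nseq (d : S) k x i : i < k * size x ->
  nth d (flatten (nseq k x)) i = nth d x (i %% size x).
Proof.
elim: k i => [|k IHk] i //=; rewrite mulSn nth_cat => i_lt.
case: ltnP => [i_x | x_i]; first by rewrite modn_small.
by rewrite IHk ?ltn_subLR // -{2}(subnK x_i) modnDr.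
Qed.

Lemma inLE r x (d : S) : x != [::] ->
  inL L r x <-> L (prepend r (fun n => nth d x (n %% size x))).
Proof.
case: x => [|a x] // _; rewrite /inL.
suff -> : (fun n => nth a (a :: x) (n %% size (a :: x))) =
          (fun n => nth d (a :: x) (n %% size (a :: x))) by [].
by apply: funext => n; apply: set_nth_default; rewrite ltn_pmod.
Qed.

Lemma inL_flatten_nseq r v k : 0 < k -> inL L r v -> inL L r (flatten (nseq k v)).
Proof.
case: v => [|a v] // k_gt0.
have vk_nil : flatten (nseq k (a :: v)) != [::] by case: k k_gt0.
rewrite (inLE _ _ a) // (inLE _ _ a) // size_flatten_nseq.
suff -> : (fun n => nth a (flatten (nseq k (a :: v))) (n %% (k * size (a :: v)))) =
          (fun n => nth a (a :: v) (n %% size (a :: v))) by [].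
apply: funext => n; rewrite nth_flatten_nseq ?ltn_pmod ?muln_gt0 ?k_gt0 //.
by rewrite modn_dvdm ?dvdn_mull.
Qed.

Section Progress.
Variables (K : fdfa_kind) (u : seq S).

#[global] Instance progeq_equiv : Equivalence (progeq K L u).
Proof.
case: K; split=> /=.
- by [].
- by move=> x y xy v; rewrite xy.
- by move=> x y z xy yz v; rewrite xy yz.
- by move=> x; split => //; reflexivity.
- move=> x y [ux_uy xy]; split; first by symmetry.
  move=> v uyv_u; symmetry; apply: xy; rewrite catA.
  by transitivity ((u ++ y) ++ v); [apply: simL_rcong | rewrite -catA].
- move=> x y z [ux_uy xy] [uy_uz yz]; split; first by transitivity (u ++ y).
  move=> v uxv_u; rewrite xy //; apply: yz; rewrite catA.
  transitivity ((u ++ x) ++ v); last by rewrite -catA.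
  by apply: simL_rcong; symmetry.
- by [].
- by move=> x y xy v; rewrite xy.
- by move=> x y z xy yz v; rewrite xy yz.
Qed.

Lemma progeq_rcong x y z : progeq K L u x y -> progeq K L u (x ++ z) (y ++ z).
Proof.
case: K => /=.
- by move=> xy v; rewrite -!catA xy.
- move=> [ux_uy xy]; split; first by rewrite !catA; apply: simL_rcong.
  by move=> v; rewrite -!catA; apply: xy.
- by move=> xy v; rewrite -!catA xy.
Qed.

Lemma progacc_compat x y : progeq K L u x y -> progacc K L u x -> progacc K L u y.
Proof.
case: K => /=.
- by move/(_ [::]); rewrite !cats0 => ->.
- move=> [ux_uy /(_ [::])] + [ux_u acc_x]; rewrite !cats0 => xy.
  by split; [transitivity (u ++ x); first symmetry | rewrite -xy].
- by move/(_ [::]); rewrite !cats0 => ->.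
Qed.

Lemma progacc_flatten_nseq v k :
  0 < k -> progacc K L u v -> progacc K L u (flatten (nseq k v)).
Proof.
case: K => /= k_gt0; first exact: inL_flatten_nseq.
all: by case=> uv_u acc_v; split; [apply: simL_cat_flatten_nseq | apply: inL_flatten_nseq].
Qed.

End Progress.

Lemma canonical_fdfa_acceptsP K u v :
  fdfa_accepts (canonical_fdfa K L) u v <->
  simL L (u ++ v) u /\
  progacc K L (Defs.repr (dfa_run (leading_dfa L) u)) v.
Proof.
rewrite /fdfa_accepts class_dfa_run_eqP; last exact: simL_rcong.
rewrite class_dfa_accP //.
- by apply: progeq_rcong.
- by apply: progacc_compat.
Qed.

End CanonicalFdfa.

Theorem proposition1 (S : finType) (L : oword S -> Prop) (K : fdfa_kind)
    (u v : seq S) :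
  omega_regular L ->
  fdfa_accepts (canonical_fdfa K L) u v ->
  forall k : nat, 0 < k ->
    fdfa_accepts (canonical_fdfa K L) u (flatten (nseq k v)).
Proof.
move=> _ /canonical_fdfa_acceptsP [uv_u acc_v] k k_gt0.
apply/canonical_fdfa_acceptsP; split; first exact: simL_cat_flatten_nseq.
exact: progacc_flatten_nseq.
Qed.
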